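(* Let $n\ge1$, $\beta\ge2(n+2)$ and let $\Pi$ be a parameter set. Let $\mathcal{M}_\beta$ be the set of infinite matrices $A=(A_{ij})_{i,j\ge1}$ whose entries $A_{ij}=A_{ij}(\xi)$ are complex $2\times2$ matrices depending on $\xi\in\Pi$, such that $[A]_\beta<\infty$, where $[A]_\beta$ is the smallest constant with $$\sup_{\xi\in\Pi}\|A_{ij}(\xi)\|_{HS}\le\frac{[A]_\beta}{(1+\ln i)^\beta(1+\ln j)^\beta(1+|i-j|)}\quad\text{for all } i,j\ge1,$$ $\|\cdot\|_{HS}$ denoting the Hilbert–Schmidt norm. Then for $A,B\in\mathcal{M}_\beta$ the product $(A\cdot B)_{jl}=\sum_{k\ge1}A_{jk}B_{kl}$ satisfies $A\cdot B\in\mathcal{M}_\beta$ and $[A\cdot B]_\beta\le C[A]_\beta[B]_\beta$ for a constant $C$ independent of $A,B$. *)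

From Stdlib Require Import Reals Lra.
From Coquelicot Require Import Coquelicot.
Open Scope R_scope.

Inductive idx2 : Type := I1 | I2.

Definition mat2 : Type := idx2 -> idx2 -> C.

Definition hs_norm (M : mat2) : R :=
  sqrt (Cmod (M I1 I1) ^ 2 + Cmod (M I1 I2) ^ 2
        + Cmod (M I2 I1) ^ 2 + Cmod (M I2 I2) ^ 2).

Definition mat2_mul (M N : mat2) : mat2 :=
  fun a c => Cplus (Cmult (M a I1) (N I1 c)) (Cmult (M a I2) (N I2 c)).

(* Infinite matrices (A_ij)_{i,j >= 1} with entries depending on xi in Pi.
   Indices are natural numbers; only indices >= 1 are relevant. *)
Definition infmat (Pi : Type) : Type := Pi -> nat -> nat -> mat2.

Definition weight (beta : R) (i j : nat) : R :=
  Rpower (1 + ln (INR i)) beta * Rpower (1 + ln (INR j)) beta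
  * (1 + Rabs (INR i - INR j)).

Definition admissible {Pi : Type} (beta : R) (A : infmat Pi) (c : R) : Prop :=
  forall (xi : Pi) (i j : nat), (1 <= i)%nat -> (1 <= j)%nat ->
    hs_norm (A xi i j) <= c / weight beta i j.

Definition in_M {Pi : Type} (beta : R) (A : infmat Pi) : Prop :=
  exists c : R, admissible beta A c.

Definition brk {Pi : Type} (beta : R) (A : infmat Pi) : Rbar :=
  Glb_Rbar (fun c => admissible beta A c).

Definition infmat_mul {Pi : Type} (A B : infmat Pi) : infmat Pi :=
  fun xi j l a c =>
    (Series (fun k => fst (mat2_mul (A xi j (S k)) (B xi (S k) l) a c)),
     Series (fun k => snd (mat2_mul (A xi j (S k)) (B xi (S k) l) a c))).

(* Writing L_k = 1 + ln k, the weights satisfy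
   1 / (w(j,k) w(k,l)) <= (1 / w(j,l)) (K(j,k) + K(l,k)) with the kernel
   K(j,k) = 1 / (L_k^2 (1 + |j - k|)), because L_k^(2 beta) >= L_k^2 and
   1 + |j - l| <= (1 + |j - k|) + (1 + |k - l|).  So the product is bounded
   entrywise by a constant times [A][B] / w(j,l) as soon as sum_k K(j,k) is
   bounded uniformly in j.  Away from k ~ j we have 1 + |j - k| >= k / 2 and
   the sum is dominated by sum 1 / (k L_k^2) < oo; for j/2 <= k < 2j we have
   L_j <= 2 L_k and the harmonic sum sum_k 1 / (1 + |j - k|) = O(L_j) is
   absorbed by the factor L_j^(-2).  Both sums are bounded by telescoping
   against explicit potentials. *)

From Stdlib Require Import Reals Lra Lia Classical.
From Coquelicot Require Import Coquelicot.
Open Scope R_scope.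

Lemma ln_le_sub_1 x : 0 < x -> ln x <= x - 1.
Proof. intros Hx. generalize (exp_ineq1_le (ln x)). rewrite exp_ln; lra. Qed.

Lemma inv_succ_le_ln_diff x : 0 < x -> / (x + 1) <= ln (x + 1) - ln x.
Proof.
  intros Hx.
  assert (H : ln (x / (x + 1)) <= x / (x + 1) - 1).
  { apply ln_le_sub_1, Rdiv_lt_0_compat; lra. }
  rewrite ln_div in H by lra.
  replace (x / (x + 1) - 1) with (- / (x + 1)) in H by (field; lra).
  lra.
Qed.

Lemma ln_le_1_plus_ln x y : 0 < x -> x <= 2 * y -> ln x <= 1 + ln y.
Proof.
  intros Hx Hxy. apply Rle_trans with (ln (2 * y)); [apply ln_le; lra|].
  rewrite ln_mult by lra. generalize (ln_le_sub_1 2 ltac:(lra)). lra.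
Qed.

Lemma INR_ge_1 k : (1 <= k)%nat -> 1 <= INR k.
Proof. intros Hk. apply (le_INR 1 k) in Hk. simpl in Hk. lra. Qed.

Lemma INR_le_double m n : (m <= 2 * n)%nat -> INR m <= 2 * INR n.
Proof. intros H. apply le_INR in H. rewrite mult_INR in H. simpl in H. lra. Qed.

Lemma ln_INR_nonneg k : (1 <= k)%nat -> 0 <= ln (INR k).
Proof. intros Hk. rewrite <- ln_1. apply ln_le; [lra | now apply INR_ge_1]. Qed.

Definition logw (k : nat) : R := 1 + ln (INR k).

Lemma logw_ge_1 k : (1 <= k)%nat -> 1 <= logw k.
Proof. intros Hk. unfold logw. generalize (ln_INR_nonneg k Hk). lra. Qed.

Lemma logw_le_double j k :
  (1 <= j)%nat -> (1 <= k)%nat -> (j <= 2 * k)%nat -> logw j <= 2 * logw k.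
Proof.
  intros Hj Hk Hjk. unfold logw.
  assert (ln (INR j) <= 1 + ln (INR k)).
  { apply ln_le_1_plus_ln; [generalize (INR_ge_1 j Hj); lra|].
    now apply INR_le_double. }
  generalize (ln_INR_nonneg k Hk). lra.
Qed.

(** * Two telescoping potentials *)

(* The value at 0 only has to absorb the first term 1 / (1 * L_1^2) = 1. *)
Definition log_potential (m : nat) : R :=
  match m with O => 2 | _ => / logw m end.

Lemma log_potential_nonneg m : 0 <= log_potential m.
Proof.
  destruct m as [|m]; simpl; [lra|].
  left. apply Rinv_0_lt_compat. generalize (logw_ge_1 (S m) ltac:(lia)). lra.
Qed.

Lemma log_potential_step m :
  / (INR (S m) * logw (S m) ^ 2) <= log_potential m - log_potential (S m).
Proof.
  destruct m as [|m].
  - assert (H1 : logw 1 = 1) by (unfold logw; simpl; rewrite ln_1; ring).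
    change (/ (INR 1 * logw 1 ^ 2) <= 2 - / logw 1). rewrite H1. simpl. lra.
  - change (log_potential (S m)) with (/ logw (S m)).
    change (log_potential (S (S m))) with (/ logw (S (S m))).
    unfold logw. rewrite (S_INR (S m)).
    set (x := INR (S m)).
    assert (Hx : 1 <= x) by (apply INR_ge_1; lia).
    set (p := 1 + ln x). set (q := 1 + ln (x + 1)).
    assert (Hp : 1 <= p).
    { assert (0 <= ln x) by (apply ln_INR_nonneg; lia). unfold p. lra. }
    assert (Hd : / (x + 1) <= q - p)
      by (unfold q, p; generalize (inv_succ_le_ln_diff x ltac:(lra)); lra).
    assert (Hx1 : 0 < / (x + 1)) by (apply Rinv_0_lt_compat; lra).
    replace (/ ((x + 1) * q ^ 2)) with (/ (x + 1) * / (q * q)) by (field; lra).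
    replace (/ p - / q) with ((q - p) * / (p * q)) by (field; lra).
    apply Rmult_le_compat; try lra.
    + left. apply Rinv_0_lt_compat. nra.
    + apply Rinv_le_contravar; nra.
Qed.

(* A discrete antiderivative of k |-> 1 / (1 + |j - k|) on 1 <= k < 2j
   (up to a factor 2), constant beyond 2j. *)
Definition harmonic_potential (j k : nat) : R :=
  if Nat.leb k j then ln (INR j - INR k + 1)
  else if Nat.leb k (2 * j) then - ln (INR k - INR j + 1)
  else - ln (INR j + 1).

Lemma harmonic_potential_lower j k : (k <= j)%nat ->
  harmonic_potential j k = ln (INR j - INR k + 1).
Proof. intros H. unfold harmonic_potential. now rewrite (proj2 (Nat.leb_le k j) H). Qed.

Lemma harmonic_potential_upper j k : (j <= k <= 2 * j)%nat ->
  harmonic_potential j k = - ln (INR k - INR j + 1).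
Proof.
  intros H. unfold harmonic_potential.
  destruct (Nat.leb k j) eqn:E.
  - apply Nat.leb_le in E. replace k with j by lia.
    replace (INR j - INR j + 1) with 1 by ring. rewrite ln_1. ring.
  - now rewrite (proj2 (Nat.leb_le k (2 * j))) by lia.
Qed.

Lemma harmonic_potential_beyond j k : (1 <= j)%nat -> (2 * j <= k)%nat ->
  harmonic_potential j k = - ln (INR j + 1).
Proof.
  intros Hj H. destruct (Nat.eq_dec k (2 * j)) as [->|E].
  - rewrite harmonic_potential_upper by lia. rewrite mult_INR. simpl (INR 2).
    f_equal. f_equal. ring.
  - unfold harmonic_potential.
    now rewrite (proj2 (Nat.leb_gt k j)), (proj2 (Nat.leb_gt k (2 * j))) by lia.
Qed.

Lemma harmonic_potential_step j k : (1 <= j)%nat ->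
  0 <= harmonic_potential j k - harmonic_potential j (S k) /\
  ((k < 2 * j)%nat ->
   / (1 + Rabs (INR j - INR k)) <= 2 * (harmonic_potential j k - harmonic_potential j (S k))).
Proof.
  intros Hj.
  destruct (Nat.lt_ge_cases k j) as [Hlow|Hup];
    [|destruct (Nat.lt_ge_cases k (2 * j)) as [Hup2|Hbeyond]].
  - rewrite !harmonic_potential_lower by lia. rewrite S_INR.
    assert (HK : INR k + 1 <= INR j) by (rewrite <- S_INR; apply le_INR; lia).
    set (x := INR j - (INR k + 1) + 1).
    replace (INR j - INR k + 1) with (x + 1) by (unfold x; ring).
    replace (1 + Rabs (INR j - INR k)) with (x + 1)
      by (rewrite Rabs_right by lra; unfold x; ring).
    assert (Hl := inv_succ_le_ln_diff x ltac:(unfold x; lra)).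
    assert (0 < / (x + 1)) by (apply Rinv_0_lt_compat; unfold x; lra).
    split; [|intros _]; lra.
  - rewrite !harmonic_potential_upper by lia. rewrite S_INR.
    assert (HK : INR j <= INR k) by (apply le_INR; lia).
    set (x := INR k - INR j + 1).
    replace (INR k + 1 - INR j + 1) with (x + 1) by (unfold x; ring).
    replace (1 + Rabs (INR j - INR k)) with x
      by (rewrite Rabs_left1 by lra; unfold x; ring).
    assert (Hl := inv_succ_le_ln_diff x ltac:(unfold x; lra)).
    assert (0 < / (x + 1)) by (apply Rinv_0_lt_compat; unfold x; lra).
    assert (/ x <= 2 * / (x + 1)).
    { replace (2 * / (x + 1)) with (/ ((x + 1) / 2)) by (field; unfold x; lra).
      apply Rinv_le_contravar; unfold x; lra. }
    split; [|intros _]; lra.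
  - rewrite !harmonic_potential_beyond by lia. split; [lra | lia].
Qed.

Lemma harmonic_potential_ge j k : (1 <= j)%nat -> - ln (INR j + 1) <= harmonic_potential j k.
Proof.
  intros Hj. assert (HJ := INR_ge_1 j Hj).
  destruct (Nat.le_gt_cases k j) as [Hlow|Hup];
    [|destruct (Nat.le_gt_cases k (2 * j)) as [Hup2|Hbeyond]].
  - rewrite harmonic_potential_lower by lia.
    assert (INR k <= INR j) by (apply le_INR; lia).
    assert (0 <= ln (INR j - INR k + 1)) by (rewrite <- ln_1; apply ln_le; lra).
    assert (0 <= ln (INR j + 1)) by (rewrite <- ln_1; apply ln_le; lra).
    lra.
  - rewrite harmonic_potential_upper by lia.
    assert (INR j < INR k) by (apply lt_INR; lia).
    assert (INR k <= 2 * INR j) by (apply INR_le_double; lia).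
    assert (ln (INR k - INR j + 1) <= ln (INR j + 1)) by (apply ln_le; lra).
    lra.
  - rewrite harmonic_potential_beyond by lia. lra.
Qed.

Lemma harmonic_potential_range j k : (1 <= j)%nat ->
  harmonic_potential j 1 - harmonic_potential j k <= 2 * logw j.
Proof.
  intros Hj. assert (HJ := INR_ge_1 j Hj).
  rewrite harmonic_potential_lower by lia. simpl (INR 1).
  replace (INR j - 1 + 1) with (INR j) by ring.
  assert (ln (INR j + 1) <= 1 + ln (INR j)) by (apply ln_le_1_plus_ln; lra).
  generalize (harmonic_potential_ge j k Hj) (ln_INR_nonneg j Hj).
  unfold logw. lra.
Qed.

(** * The summation kernel *)

Definition kernel (j k : nat) : R := / (logw k ^ 2 * (1 + Rabs (INR j - INR k))).

Lemma kernel_le_far j k : (1 <= k)%nat -> (2 * j <= k \/ 2 * k <= j)%nat ->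
  kernel j k <= 2 * / (INR k * logw k ^ 2).
Proof.
  intros Hk Hjk. unfold kernel.
  assert (HK := INR_ge_1 k Hk). assert (HL := logw_ge_1 k Hk).
  assert (Hd : INR k / 2 <= 1 + Rabs (INR j - INR k)).
  { destruct Hjk as [H|H]; apply le_INR in H; rewrite mult_INR in H; simpl in H.
    - rewrite Rabs_left1; lra.
    - rewrite Rabs_right; lra. }
  replace (2 * / (INR k * logw k ^ 2)) with (/ (logw k ^ 2 * (INR k / 2))) by (field; lra).
  apply Rinv_le_contravar.
  - apply Rmult_lt_0_compat; [apply pow_lt|]; lra.
  - apply Rmult_le_compat_l; [apply pow_le|]; lra.
Qed.

Lemma kernel_le_near j k : (1 <= j)%nat -> (1 <= k)%nat -> (j <= 2 * k)%nat ->
  kernel j k <= 4 / logw j ^ 2 * / (1 + Rabs (INR j - INR k)).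
Proof.
  intros Hj Hk Hjk. unfold kernel.
  assert (HLj := logw_ge_1 j Hj).
  assert (HL := logw_le_double j k Hj Hk Hjk).
  assert (Hd : 0 < 1 + Rabs (INR j - INR k)) by (generalize (Rabs_pos (INR j - INR k)); lra).
  replace (4 / logw j ^ 2 * / (1 + Rabs (INR j - INR k)))
    with (/ ((logw j / 2) ^ 2 * (1 + Rabs (INR j - INR k)))) by (field; lra).
  apply Rinv_le_contravar.
  - apply Rmult_lt_0_compat; [apply pow_lt|]; lra.
  - apply Rmult_le_compat_r; [lra|]. apply pow_incr. lra.
Qed.

Lemma kernel_step j m : (1 <= j)%nat ->
  kernel j (S m) <= 2 * (log_potential m - log_potential (S m))
    + 8 / logw j ^ 2 * (harmonic_potential j (S m) - harmonic_potential j (S (S m))).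
Proof.
  intros Hj.
  assert (Hlog := log_potential_step m).
  destruct (harmonic_potential_step j (S m) Hj) as [Hh0 Hh].
  assert (HLj := logw_ge_1 j Hj).
  assert (Hc : 0 <= 8 / logw j ^ 2).
  { unfold Rdiv.
    apply Rmult_le_pos; [lra|]. left. apply Rinv_0_lt_compat, pow_lt. lra. }
  assert (Hhc := Rmult_le_pos _ _ Hc Hh0).
  destruct (Nat.le_gt_cases (2 * j) (S m)) as [Hfar|Hnear1];
    [|destruct (Nat.le_gt_cases (2 * S m) j) as [Hfar|Hnear2]].
  - generalize (kernel_le_far j (S m) ltac:(lia) (or_introl Hfar)). lra.
  - generalize (kernel_le_far j (S m) ltac:(lia) (or_intror Hfar)). lra.
  - assert (Hpos : 0 <= / (INR (S m) * logw (S m) ^ 2)).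
    { left. apply Rinv_0_lt_compat, Rmult_lt_0_compat; [apply lt_0_INR; lia|].
      apply pow_lt. generalize (logw_ge_1 (S m) ltac:(lia)). lra. }
    eapply Rle_trans; [apply kernel_le_near; lia|].
    specialize (Hh Hnear1).
    assert (4 / logw j ^ 2 * / (1 + Rabs (INR j - INR (S m)))
            <= 8 / logw j ^ 2 * (harmonic_potential j (S m) - harmonic_potential j (S (S m)))).
    { replace (8 / logw j ^ 2) with (4 / logw j ^ 2 * 2) by (field; lra).
      rewrite Rmult_assoc. apply Rmult_le_compat_l; lra. }
    lra.
Qed.

Lemma sum_n_le_telescope (a u : nat -> R) N : (forall m, a m <= u m - u (S m)) ->
  sum_n a N <= u O - u (S N).
Proof.
  intros H. induction N as [|N IH].
  - rewrite sum_O. apply H.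
  - rewrite sum_Sn. specialize (H (S N)). change (plus ?x ?y) with (x + y). lra.
Qed.

Lemma kernel_partial_sum_le j N : (1 <= j)%nat ->
  sum_n (fun m => kernel j (S m)) N <= 20.
Proof.
  intros Hj. assert (HLj := logw_ge_1 j Hj).
  eapply Rle_trans.
  { apply (sum_n_le_telescope _
      (fun m => 2 * log_potential m + 8 / logw j ^ 2 * harmonic_potential j (S m))).
    intros m. generalize (kernel_step j m Hj). lra. }
  cbv beta. change (log_potential O) with 2.
  assert (HU := log_potential_nonneg (S N)).
  assert (Hh : 8 / logw j ^ 2 * (harmonic_potential j 1 - harmonic_potential j (S (S N)))
               <= 8 / logw j ^ 2 * (2 * logw j)).
  { apply Rmult_le_compat_l; [|now apply harmonic_potential_range].
    unfold Rdiv. apply Rmult_le_pos; [lra|]. left. apply Rinv_0_lt_compat, pow_lt. lra. }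
  replace (8 / logw j ^ 2 * (2 * logw j)) with (16 / logw j) in Hh by (field; lra).
  assert (16 / logw j <= 16).
  { unfold Rdiv. rewrite <- (Rmult_1_r 16) at 2. apply Rmult_le_compat_l; [lra|].
    rewrite <- Rinv_1. apply Rinv_le_contravar; lra. }
  lra.
Qed.

Lemma Rpower_ge_base x beta : 1 <= x -> 1 <= beta -> x <= Rpower x beta.
Proof. intros Hx Hb. rewrite <- (Rpower_1 x) at 1 by lra. apply Rle_Rpower; lra. Qed.

Lemma Rpower_pos x y : 0 < Rpower x y.
Proof. apply exp_pos. Qed.

Lemma weight_pos beta i j : 0 < weight beta i j.
Proof.
  unfold weight. apply Rmult_lt_0_compat; [apply Rmult_lt_0_compat; apply Rpower_pos|].
  generalize (Rabs_pos (INR i - INR j)). lra.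
Qed.

Lemma inv_mul_le_inv_sum x y z : 0 < x -> 0 < y -> 0 < z -> z <= x + y ->
  / (x * y) <= / z * (/ x + / y).
Proof.
  intros Hx Hy Hz Hxyz.
  replace (/ z * (/ x + / y)) with ((x + y) / z * / (x * y)) by (field; lra).
  rewrite <- (Rmult_1_l (/ (x * y))) at 1.
  apply Rmult_le_compat_r; [left; apply Rinv_0_lt_compat; nra|].
  apply Rmult_le_reg_r with z; [lra|]. unfold Rdiv. rewrite Rmult_assoc, Rinv_l; lra.
Qed.

Lemma inv_weight_mul_le beta j k l : 1 <= beta -> (1 <= k)%nat ->
  / (weight beta j k * weight beta k l) <= / weight beta j l * (kernel j k + kernel l k).
Proof.
  intros Hb Hk. unfold weight, kernel. change (1 + ln (INR k)) with (logw k).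
  rewrite (Rabs_minus_sym (INR l) (INR k)).
  assert (HL := logw_ge_1 k Hk).
  set (Pj := Rpower (1 + ln (INR j)) beta). set (Pl := Rpower (1 + ln (INR l)) beta).
  set (Pk := Rpower (logw k) beta).
  set (a := 1 + Rabs (INR j - INR k)). set (b := 1 + Rabs (INR k - INR l)).
  set (c := 1 + Rabs (INR j - INR l)).
  assert (Hj0 : 0 < Pj) by apply Rpower_pos. assert (Hl0 : 0 < Pl) by apply Rpower_pos.
  assert (HPk : logw k <= Pk) by (now apply Rpower_ge_base).
  assert (Ha : 0 < a) by (unfold a; generalize (Rabs_pos (INR j - INR k)); lra).
  assert (Hb0 : 0 < b) by (unfold b; generalize (Rabs_pos (INR k - INR l)); lra).
  assert (Hc : 0 < c) by (unfold c; generalize (Rabs_pos (INR j - INR l)); lra).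
  assert (Habc : c <= a + b).
  { unfold a, b, c. replace (INR j - INR l) with ((INR j - INR k) + (INR k - INR l)) by ring.
    generalize (Rabs_triang (INR j - INR k) (INR k - INR l)). lra. }
  replace (/ (Pj * Pk * a * (Pk * Pl * b))) with (/ (Pj * Pl) * / (Pk * Pk) * / (a * b))
    by (field; repeat split; lra).
  replace (/ (Pj * Pl * c) * (/ (logw k ^ 2 * a) + / (logw k ^ 2 * b)))
    with (/ (Pj * Pl) * / (logw k ^ 2) * (/ c * (/ a + / b))) by (field; repeat split; lra).
  apply Rmult_le_compat.
  - left. apply Rmult_lt_0_compat; apply Rinv_0_lt_compat; nra.
  - left. apply Rinv_0_lt_compat. nra.
  - apply Rmult_le_compat_l; [left; apply Rinv_0_lt_compat; nra|].
    apply Rinv_le_contravar; [apply pow_lt; lra | simpl; nra].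
  - now apply inv_mul_le_inv_sum.
Qed.

Lemma Cmod_le_hs_norm (M : mat2) a b : Cmod (M a b) <= hs_norm M.
Proof.
  unfold hs_norm. rewrite <- (sqrt_pow2 (Cmod (M a b))) by apply Cmod_ge_0.
  apply sqrt_le_1_alt.
  generalize (pow2_ge_0 (Cmod (M I1 I1))) (pow2_ge_0 (Cmod (M I1 I2)))
    (pow2_ge_0 (Cmod (M I2 I1))) (pow2_ge_0 (Cmod (M I2 I2))).
  destruct a, b; lra.
Qed.

Lemma hs_norm_le_entrywise (M : mat2) e : (forall a b, Cmod (M a b) <= e) ->
  hs_norm M <= 2 * e.
Proof.
  intros H. assert (He : 0 <= e) by (generalize (H I1 I1) (Cmod_ge_0 (M I1 I1)); lra).
  unfold hs_norm. rewrite <- (sqrt_square (2 * e)) by lra.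
  apply sqrt_le_1_alt.
  assert (Hs : forall a b, Cmod (M a b) ^ 2 <= e * e).
  { intros a b. simpl. rewrite Rmult_1_r.
    apply Rmult_le_compat; try apply Cmod_ge_0; apply H. }
  generalize (Hs I1 I1) (Hs I1 I2) (Hs I2 I1) (Hs I2 I2). lra.
Qed.

Lemma Cmod_mat2_mul_le (M N : mat2) a c :
  Cmod (mat2_mul M N a c) <= 2 * (hs_norm M * hs_norm N).
Proof.
  unfold mat2_mul. eapply Rle_trans; [apply Cmod_triangle|]. rewrite !Cmod_mult.
  assert (H : forall x y, Cmod (M a x) * Cmod (N y c) <= hs_norm M * hs_norm N).
  { intros. apply Rmult_le_compat; try apply Cmod_ge_0; apply Cmod_le_hs_norm. }
  generalize (H I1 I1) (H I2 I2). lra.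
Qed.

Lemma ex_series_bounded_nonneg (b : nat -> R) M :
  (forall m, 0 <= b m) -> (forall N, sum_n b N <= M) -> ex_series b /\ Series b <= M.
Proof.
  intros H0 HM.
  assert (Hincr : forall N, sum_n b N <= sum_n b (S N)).
  { intros N. rewrite sum_Sn. change (plus ?x ?y) with (x + y). generalize (H0 (S N)). lra. }
  destruct (ex_finite_lim_seq_incr (sum_n b) M Hincr HM) as [l Hl].
  split; [now exists l|].
  rewrite (is_series_unique b l Hl).
  exact (is_lim_seq_le (sum_n b) (fun _ => M) l M HM Hl (is_lim_seq_const M)).
Qed.

Lemma Series_dominated (f b : nat -> R) : (forall m, Rabs (f m) <= b m) -> ex_series b ->
  ex_series f /\ Rabs (Series f) <= Series b.
Proof.
  intros Hf Hb. split; [exact (ex_series_le f b Hf Hb)|].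
  assert (Habs : ex_series (fun m => Rabs (f m))).
  { apply (ex_series_le (fun m => Rabs (f m)) b); [|exact Hb]. intros m.
    change (Rabs (Rabs (f m)) <= b m). rewrite Rabs_Rabsolu. apply Hf. }
  eapply Rle_trans; [now apply Series_Rabs|].
  apply Series_le; [|exact Hb]. intros m. split; [apply Rabs_pos | apply Hf].
Qed.

Lemma is_series_pair (z : nat -> C) x y :
  is_series (fun k => fst (z k)) x -> is_series (fun k => snd (z k)) y -> is_series z (x, y).
Proof.
  intros Hx Hy. unfold is_series in *.
  assert (Hsum : forall N,
    sum_n z N = (sum_n (fun k => fst (z k)) N, sum_n (fun k => snd (z k)) N)).
  { induction N as [|N IH].
    - rewrite !sum_O. now destruct (z O).
    - rewrite !sum_Sn, IH. reflexivity. }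
  apply filterlim_locally. intros eps.
  generalize (filter_and _ _ (proj1 (filterlim_locally _ _) Hx eps)
                             (proj1 (filterlim_locally _ _) Hy eps)).
  apply filter_imp. intros N [H1 H2]. rewrite Hsum. now split.
Qed.

Lemma is_series_C_dominated (z : nat -> C) (b : nat -> R) M :
  (forall m, Cmod (z m) <= b m) -> (forall N, sum_n b N <= M) ->
  is_series z (Series (fun k => fst (z k)), Series (fun k => snd (z k))) /\
  Cmod (Series (fun k => fst (z k)), Series (fun k => snd (z k))) <= 2 * M.
Proof.
  intros Hz HM.
  assert (Hb0 : forall m, 0 <= b m) by (intros m; generalize (Cmod_ge_0 (z m)) (Hz m); lra).
  destruct (ex_series_bounded_nonneg b M Hb0 HM) as [Hb HbM].
  destruct (Series_dominated (fun k => fst (z k)) b) as [E1 B1]; [|exact Hb|].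
  { intros m. eapply Rle_trans; [apply re_le_Cmod | apply Hz]. }
  destruct (Series_dominated (fun k => snd (z k)) b) as [E2 B2]; [|exact Hb|].
  { intros m. eapply Rle_trans; [|apply Hz]. eapply Rle_trans; [|apply Rmax_Cmod]. apply Rmax_r. }
  split; [now apply is_series_pair; apply Series_correct|].
  eapply Rle_trans; [apply Cmod_2Rmax|]. simpl fst; simpl snd.
  assert (Hmax : Rmax (Rabs (Series (fun k => fst (z k)))) (Rabs (Series (fun k => snd (z k))))
                 <= M) by (apply Rmax_lub; lra).
  assert (Hmax0 := Rle_trans _ _ _ (Rabs_pos _)
                     (Rmax_l (Rabs (Series (fun k => fst (z k))))
                             (Rabs (Series (fun k => snd (z k)))))).
  assert (Hsqrt2 : sqrt 2 <= 2).
  { rewrite <- (sqrt_square 2) at 2 by lra. apply sqrt_le_1_alt. lra. }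
  apply Rmult_le_compat; try lra. apply sqrt_pos.
Qed.

(** * Products of weighted matrices *)

Lemma admissible_nonneg {Pi : Type} beta (A : infmat Pi) c (xi : Pi) :
  admissible beta A c -> 0 <= c.
Proof.
  intros H. specialize (H xi 1%nat 1%nat ltac:(lia) ltac:(lia)).
  assert (Hw := weight_pos beta 1 1).
  assert (0 <= hs_norm (A xi 1%nat 1%nat)) by apply sqrt_pos.
  replace c with (c / weight beta 1 1 * weight beta 1 1) by (field; lra).
  apply Rmult_le_pos; lra.
Qed.

Lemma Cmod_product_term_le {Pi : Type} beta (A B : infmat Pi) a b xi j k l ac cc :
  1 <= beta -> admissible beta A a -> admissible beta B b ->
  (1 <= j)%nat -> (1 <= k)%nat -> (1 <= l)%nat ->
  Cmod (mat2_mul (A xi j k) (B xi k l) ac cc)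
  <= 2 * (a * b / weight beta j l) * (kernel j k + kernel l k).
Proof.
  intros Hb HA HB Hj Hk Hl.
  assert (Ha0 := admissible_nonneg beta A a xi HA).
  assert (Hb0 := admissible_nonneg beta B b xi HB).
  assert (W1 := weight_pos beta j k). assert (W2 := weight_pos beta k l).
  assert (W := weight_pos beta j l).
  eapply Rle_trans; [apply Cmod_mat2_mul_le|].
  apply Rle_trans with (2 * (a / weight beta j k * (b / weight beta k l))).
  { apply Rmult_le_compat_l; [lra|].
    apply Rmult_le_compat; try apply sqrt_pos; [apply HA | apply HB]; lia. }
  replace (2 * (a / weight beta j k * (b / weight beta k l)))
    with (2 * (a * b) * / (weight beta j k * weight beta k l)) by (field; lra).
  replace (2 * (a * b / weight beta j l) * (kernel j k + kernel l k))
    with (2 * (a * b) * (/ weight beta j l * (kernel j k + kernel l k))) by (field; lra).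
  apply Rmult_le_compat_l; [nra|]. now apply inv_weight_mul_le.
Qed.

Lemma infmat_mul_entry {Pi : Type} beta (A B : infmat Pi) a b xi j l ac cc :
  1 <= beta -> admissible beta A a -> admissible beta B b -> (1 <= j)%nat -> (1 <= l)%nat ->
  is_series (fun k => mat2_mul (A xi j (S k)) (B xi (S k) l) ac cc) (infmat_mul A B xi j l ac cc)
  /\ Cmod (infmat_mul A B xi j l ac cc) <= 160 * (a * b / weight beta j l).
Proof.
  intros Hb HA HB Hj Hl.
  set (D := 2 * (a * b / weight beta j l)).
  assert (HD : 0 <= D).
  { assert (Ha0 := admissible_nonneg beta A a xi HA).
    assert (Hb0 := admissible_nonneg beta B b xi HB).
    assert (W := weight_pos beta j l).
    unfold D, Rdiv. apply Rmult_le_pos; [lra|].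
    apply Rmult_le_pos; [nra | left; now apply Rinv_0_lt_compat]. }
  destruct (is_series_C_dominated (fun k => mat2_mul (A xi j (S k)) (B xi (S k) l) ac cc)
              (fun m => D * kernel j (S m) + D * kernel l (S m)) (40 * D)) as [Hs HC].
  - intros m. rewrite <- Rmult_plus_distr_l.
    apply (Cmod_product_term_le beta A B a b xi j (S m) l ac cc Hb HA HB Hj ltac:(lia) Hl).
  - intros N.
    change (sum_n (fun m => plus (scal D (kernel j (S m))) (scal D (kernel l (S m)))) N
            <= 40 * D).
    rewrite sum_n_plus, !sum_n_scal_l.
    change (D * sum_n (fun m => kernel j (S m)) N + D * sum_n (fun m => kernel l (S m)) N
            <= 40 * D).
    generalize (kernel_partial_sum_le j N Hj) (kernel_partial_sum_le l N Hl). nra.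
  - split; [exact Hs|]. eapply Rle_trans; [exact HC|]. unfold D. lra.
Qed.

Lemma admissible_infmat_mul {Pi : Type} beta (A B : infmat Pi) a b :
  1 <= beta -> admissible beta A a -> admissible beta B b ->
  admissible beta (infmat_mul A B) (320 * a * b).
Proof.
  intros Hb HA HB xi j l Hj Hl.
  assert (W := weight_pos beta j l).
  eapply Rle_trans.
  { apply hs_norm_le_entrywise. intros ac cc.
    exact (proj2 (infmat_mul_entry beta A B a b xi j l ac cc Hb HA HB Hj Hl)). }
  replace (320 * a * b / weight beta j l) with (2 * (160 * (a * b / weight beta j l)))
    by (field; lra).
  lra.
Qed.

Lemma brk_le_admissible {Pi : Type} beta (A : infmat Pi) c :
  admissible beta A c -> Rbar_le (brk beta A) c.
Proof. intros Hc. exact (proj1 (Glb_Rbar_correct (admissible beta A)) c Hc). Qed.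

(* For nonempty [Pi] the admissible constants form a closed half-line, so
   the infimum is finite and itself admissible. *)
Lemma brk_attained {Pi : Type} beta (A : infmat Pi) a (xi0 : Pi) :
  admissible beta A a -> exists a0, brk beta A = Finite a0 /\ admissible beta A a0.
Proof.
  intros HA. unfold brk.
  destruct (Glb_Rbar_correct (admissible beta A)) as [Hlb Hglb].
  assert (H0 : Rbar_le 0 (Glb_Rbar (admissible beta A))).
  { apply Hglb. intros c Hc. exact (admissible_nonneg beta A c xi0 Hc). }
  assert (H1 := Hlb a HA).
  destruct (Glb_Rbar (admissible beta A)) as [r| |]; simpl in H0, H1; try contradiction.
  exists r. split; [reflexivity|].
  intros xi i j Hi Hj. assert (Hw := weight_pos beta i j).
  assert (Hr : Rbar_le (hs_norm (A xi i j) * weight beta i j) r).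
  { apply Hglb. intros c Hc. simpl. specialize (Hc xi i j Hi Hj).
    apply Rmult_le_compat_r with (r := weight beta i j) in Hc; [|lra].
    replace (c / weight beta i j * weight beta i j) with c in Hc by (field; lra).
    exact Hc. }
  simpl in Hr. apply Rmult_le_reg_r with (weight beta i j); [lra|].
  replace (r / weight beta i j * weight beta i j) with r by (field; lra). exact Hr.
Qed.

Lemma brk_empty {Pi : Type} beta (A : infmat Pi) : ~ inhabited Pi -> brk beta A = m_infty.
Proof.
  intros Hne. unfold brk.
  destruct (Glb_Rbar_correct (admissible beta A)) as [Hlb _].
  assert (Hall : forall c, admissible beta A c).
  { intros c xi. exfalso. exact (Hne (inhabits xi)). }
  destruct (Glb_Rbar (admissible beta A)) as [r| |].
  - specialize (Hlb (r - 1) (Hall _)). simpl in Hlb. lra.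
  - destruct (Hlb 0 (Hall _)).
  - reflexivity.
Qed.

Theorem lemma5p5 (n : nat) (beta : R) (Pi : Type) :
  (1 <= n)%nat -> 2 * (INR n + 2) <= beta ->
  exists C : R,
    forall A B : infmat Pi, in_M beta A -> in_M beta B ->
      (* the series defining the product converge, entrywise in C *)
      (forall (xi : Pi) (j l : nat) (a c : idx2),
         (1 <= j)%nat -> (1 <= l)%nat ->
         is_series (fun k => mat2_mul (A xi j (S k)) (B xi (S k) l) a c)
                   (infmat_mul A B xi j l a c)) /\
      in_M beta (infmat_mul A B) /\
      Rbar_le (brk beta (infmat_mul A B))
              (Rbar_mult (Rbar_mult C (brk beta A)) (brk beta B)).
Proof.
  intros _ Hbeta.
  assert (Hb : 1 <= beta) by (generalize (pos_INR n); lra).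
  exists 320. intros A B [a HA] [b HB]. split; [|split].
  - intros xi j l ac cc Hj Hl.
    exact (proj1 (infmat_mul_entry beta A B a b xi j l ac cc Hb HA HB Hj Hl)).
  - exists (320 * a * b). now apply admissible_infmat_mul.
  - destruct (classic (inhabited Pi)) as [[xi0]|Hne].
    + destruct (brk_attained beta A a xi0 HA) as [a0 [-> HA0]].
      destruct (brk_attained beta B b xi0 HB) as [b0 [-> HB0]].
      now apply brk_le_admissible, admissible_infmat_mul.
    + rewrite (brk_empty beta (infmat_mul A B) Hne). exact I.
Qed.
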